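(* Let $r\ge0$, let $\mathbf u=(u_1,\dots,u_r)$ be a tuple of positive integers, and let $\mathbf w=(w_1,\dots,w_n)$ and $\boldsymbol\ell=(\ell_1,\dots,\ell_n)$ be tuples of positive integers with $2\le\ell_i\le w_i$ for all $i$. Define an equivalence relation $\sim$ on $\{1,\dots,n\}$ by $i\sim j$ if and only if $w_i=w_j$ and $\ell_i=\ell_j$, and let $R$ be a set of equivalence class representatives. Then \[ C(\mathrm{cat}(\mathbf u,\mathbf w),\mathrm{cat}(1^r,\boldsymbol\ell),2)=C(\mathrm{cat}(\mathbf u,\mathbf w^R),\mathrm{cat}(1^r,\boldsymbol\ell^R),2). \]
   Context: $1^r$ denotes the $r$-tuple with all entries $1$; $\mathrm{cat}(\mathbf a,\mathbf b)$ is the concatenation of tuples; for $R\subseteq\{1,\dots,n\}$, $\mathbf w^R$ denotes the tuple of entries of $\mathbf w$ in positions from $R$ (in increasing order). For tuples $\mathbf v,\mathbf k$ of positive integers of the same length $p$ with $\mathbf k\le\mathbf v$ entrywise: let $X_1,\dots,X_p$ be pairwise disjoint sets with $|X_i|=v_i$; a block is a $p$-tuple $(B_1,\dots,B_p)$ with $B_i\subseteq X_i$, $|B_i|=k_i$; a $p$-tuple of sets $(T_1,\dots,T_p)$ is $(\mathbf v,\mathbf k,2)$-admissible if $T_i\subseteq X_i$, $|T_i|\le k_i$ and $\sum|T_i|=2$, and is contained in a block if $T_i\subseteq B_i$ for all $i$. A ${\rm GC}(\mathbf v,\mathbf k,2)$ is a finite family (repetitions allowed) of blocks containing every admissible tuple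 in at least one block; $C(\mathbf v,\mathbf k,2)$ is the minimum number of blocks of such a design. *)

From mathcomp Require Import all_boot all_order.
From Stdlib Require Import ClassicalDescription.
Set Implicit Arguments. Unset Strict Implicit. Unset Printing Implicit Defensive.

(* The p = size v groups X_1..X_p are realized as subsets of a common ground
   type 'I_(Vb v) (Vb v >= every v_i); they are kept disjoint by indexing:
   a block / admissible tuple is a p-tuple (finite function on 'I_p) of sets,
   component i living in X v i = {0,...,v_i - 1}. *)

Definition Vb (v : seq nat) : nat := \max_(i < size v) nth 0 v i.

Definition X (v : seq nat) (i : 'I_(size v)) : {set 'I_(Vb v)} :=
  [set x : 'I_(Vb v) | x < nth 0 v i].

Arguments X v i : clear implicits.

Definition setTuple (v : seq nat) := {ffun 'I_(size v) -> {set 'I_(Vb v)}}.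

Definition is_block (v k : seq nat) (B : setTuple v) : bool :=
  [forall i, (B i \subset X v i) && (#|B i| == nth 0 k i)].

Definition admissible (v k : seq nat) (T : setTuple v) : bool :=
  [forall i, (T i \subset X v i) && (#|T i| <= nth 0 k i)]
  && (\sum_(i < size v) #|T i| == 2).

Arguments is_block v k B : clear implicits.
Arguments admissible v k T : clear implicits.

Definition contained_in (v : seq nat) (T B : setTuple v) : bool :=
  [forall i, T i \subset B i].

Definition is_GC (v k : seq nat) (D : seq (setTuple v)) : bool :=
  all (is_block v k) D &&
  [forall T : setTuple v, admissible v k T ==> has (contained_in T) D].

Arguments is_GC v k D : clear implicits.

Definition has_GC_of_size (v k : seq nat) (n : nat) : bool :=
  [exists D : n.-tuple (setTuple v), is_GC v k D].

(* C(v,k,2): minimum number of blocks of a GC(v,k,2)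
   (0 by convention if no GC exists, which cannot happen when k <= v). *)
Definition C (v k : seq nat) : nat :=
  match excluded_middle_informative (exists n, has_GC_of_size v k n) with
  | left H => ex_minn H
  | right _ => 0
  end.

Definition subtuple (n : nat) (w : seq nat) (R : {set 'I_n}) : seq nat :=
  [seq nth 0 w (val i) | i <- enum R].

From mathcomp Require Import all_boot all_order zify.
From Stdlib Require Import ClassicalDescription.
Set Implicit Arguments. Unset Strict Implicit. Unset Printing Implicit Defensive.

(* A GC(v,k,2) is exactly a family of blocks meeting every admissible pair of
   points: two distinct points of one group X_i with k_i >= 2, or one point in
   each of two groups.  Now let g map the groups of (v,k) to those of (v',k'),
   preserving v_i and k_i and identifying groups only when k_i >= 2.  Pulling a
   GC(v',k',2) back along g gives a GC(v,k,2) with the same number of blocks: a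
   pair split across two identified groups becomes a pair inside one group, and
   if its two points coincide it is covered by any block containing that point
   together with a second one.  Sending each index of w to its representative in
   R, and including R into {1,...,n}, gives such maps in both directions. *)

Lemma sum_nat_eq2 (I : finType) (F : I -> nat) : \sum_i F i = 2 ->
  (exists i, F i = 2 /\ forall j, j != i -> F j = 0) \/
  (exists i j, [/\ i != j, F i = 1, F j = 1 & forall t, t != i -> t != j -> F t = 0]).
Proof.
move=> sumF2.
have [i _ Fi_neq0] : exists2 i, true & F i != 0.
  by apply/forall_inPn; rewrite -sum_nat_eq0 sumF2.
rewrite (bigD1 i) //= in sumF2.
have [Fi2 | Fi1] : F i = 2 \/ F i = 1 by move: Fi_neq0 => /eqP; lia.
- move: sumF2; rewrite Fi2 => /eqP.
  rewrite -{2}[2]addn0 eqn_add2l sum_nat_eq0 => /forall_inP F0.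
  by left; exists i; split=> // j ji; apply/eqP/F0.
- move: sumF2; rewrite Fi1 => [[/eqP /sum_nat_eq1 [j [ji Fj1 F0]]]].
  right; exists i, j; split=> //; first by rewrite eq_sym.
  by move=> t ti tj; apply: F0.
Qed.

Section PairTuples.
Variables v k : seq nat.
Implicit Types (i j : 'I_(size v)) (x y : 'I_(Vb v)) (B T : setTuple v).

Definition pair_tuple i j x y : setTuple v :=
  [ffun t => (if t == i then [set x] else set0) :|: (if t == j then [set y] else set0)].

Definition pair_admissible i j x y : bool :=
  [&& x \in X v i, y \in X v j, (i, x) != (j, y),
      0 < nth 0 k i, 0 < nth 0 k j & (i == j) ==> (1 < nth 0 k i)].

Definition covers_pairs (D : seq (setTuple v)) : Prop :=
  forall i j x y, pair_admissible i j x y ->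
    exists2 B, B \in D & (x \in B i) && (y \in B j).

Lemma contained_in_pair_tuple i j x y B :
  contained_in (pair_tuple i j x y) B = (x \in B i) && (y \in B j).
Proof.
apply/forallP/andP => [sub | [xB yB] t].
  have := sub i; have := sub j; rewrite !ffunE !eqxx !subUset !sub1set.
  by case/andP=> _ -> /andP[-> _].
rewrite ffunE subUset.
by apply/andP; split; case: eqP => [->|_]; rewrite ?sub1set ?sub0set.
Qed.

Lemma admissible_pair_tuple i j x y :
  pair_admissible i j x y -> admissible v k (pair_tuple i j x y).
Proof.
case/and5P=> xX yX ixjy ki /andP[kj kij].
have [eij | ij] := eqVneq i j.
- subst j; rewrite eqxx /= in kij.
  have xy : x != y by move: ixjy; rewrite xpair_eqE eqxx.
  have Ti t : pair_tuple i i x y t = if t == i then [set x; y] else set0.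
    by rewrite ffunE; case: eqP; rewrite ?setU0.
  apply/andP; split.
    apply/forallP=> t; rewrite Ti; case: eqP => [->|_]; last by rewrite sub0set cards0.
    by rewrite subUset !sub1set xX yX cards2 xy.
  rewrite (bigD1 i) //= big1 => [|t /negbTE ti]; last by rewrite Ti ti cards0.
  by rewrite Ti eqxx cards2 xy.
- have Ti t : pair_tuple i j x y t =
      if t == i then [set x] else if t == j then [set y] else set0.
    rewrite ffunE; case: (eqVneq t i) => [->|_]; first by rewrite (negbTE ij) setU0.
    by rewrite set0U.
  apply/andP; split.
    apply/forallP=> t; rewrite Ti; case: eqP => [->|_]; first by rewrite sub1set xX cards1.
    case: eqP => [->|_]; first by rewrite sub1set yX cards1.
    by rewrite sub0set cards0.
  rewrite (bigD1 i) //= (bigD1 j) 1?eq_sym //= big1 => [|t /andP[ti tj]].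
    by rewrite !Ti eqxx [j == i]eq_sym (negbTE ij) eqxx !cards1.
  by rewrite Ti (negbTE ti) (negbTE tj) cards0.
Qed.

Lemma admissible_pair_tupleP T : admissible v k T ->
  exists i j x y, pair_admissible i j x y /\ T = pair_tuple i j x y.
Proof.
case/andP=> /forallP sizeT /eqP /sum_nat_eq2 [[i [/eqP Ti2 T0]] | [i [j [ij Ti1 Tj1 T0]]]].
- have /andP[subTi kTi] := sizeT i.
  have /cards2P [x [y [xy Tixy]]] := Ti2.
  rewrite Tixy subUset !sub1set cards2 xy in subTi kTi.
  case/andP: subTi => xX yX.
  exists i, i, x, y; split.
    by rewrite /pair_admissible xX yX xpair_eqE eqxx (negbTE xy) (ltnW kTi) kTi.
  apply/ffunP=> t; rewrite ffunE; case: (eqVneq t i) => [->|ti]; first by rewrite Tixy.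
  by rewrite setU0; apply: cards0_eq; apply: T0.
- have /andP[subTi kTi] := sizeT i; have /andP[subTj kTj] := sizeT j.
  have /eqP/cards1P [x Tix] := Ti1; have /eqP/cards1P [y Tjy] := Tj1.
  rewrite Tix sub1set cards1 in subTi kTi; rewrite Tjy sub1set cards1 in subTj kTj.
  exists i, j, x, y; split.
    by rewrite /pair_admissible subTi subTj xpair_eqE kTi kTj; case: eqP ij.
  apply/ffunP=> t; rewrite ffunE; case: (eqVneq t i) => [->|ti].
    by rewrite (negbTE ij) setU0.
  case: (eqVneq t j) => [->|tj]; first by rewrite set0U.
  by rewrite setU0; apply: cards0_eq; apply: T0.
Qed.

Lemma is_GC_pairsP D : is_GC v k D <-> all (is_block v k) D /\ covers_pairs D.
Proof.
split=> [/andP[blocks /forallP covT] | [blocks covP]].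
  split=> // i j x y /admissible_pair_tuple adm.
  have /hasP [B BD] := implyP (covT _) adm.
  by rewrite contained_in_pair_tuple; exists B.
apply/andP; split=> //; apply/forallP => T; apply/implyP.
case/admissible_pair_tupleP=> [i [j [x [y [adm ->]]]]].
have [B BD xyB] := covP i j x y adm.
by apply/hasP; exists B; rewrite ?contained_in_pair_tuple.
Qed.

End PairTuples.

Arguments covers_pairs v k D : clear implicits.

Definition resize_set a b (S : {set 'I_a}) : {set 'I_b} :=
  [set y : 'I_b | [exists x in S, val x == val y]].

Lemma card_resize_set a b (S : {set 'I_a}) :
  {in S, forall x, val x < b} -> #|resize_set b S| = #|S|.
Proof.
case: b => [|b] S_lt.
  have S0 : S =i pred0 by move=> x; apply/negP => /S_lt.
  by rewrite (eq_card0 S0); apply: eq_card0 => - [].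
have -> : resize_set b.+1 S = [set inord (val x) | x in S].
  apply/setP => y; rewrite inE.
  apply/existsP/imsetP => [[x /andP[xS /eqP xy]] | [x xS ->]].
    by exists x => //; apply: val_inj; rewrite /= inordK ?S_lt.
  by exists x; rewrite xS /= inordK ?S_lt.
rewrite card_in_imset // => x1 x2 x1S x2S /(congr1 val).
by rewrite /= !inordK ?S_lt //; apply: val_inj.
Qed.

(* The witness is 1 if x = 0 and 0 otherwise. *)
Lemma X_other_point v (i : 'I_(size v)) (x : 'I_(Vb v)) :
  1 < nth 0 v i -> exists2 z, z \in X v i & z != x.
Proof.
move=> v2; have zv : (val x == 0 : nat) < nth 0 v i.
  by case: (_ == 0) => //; apply: ltnW.
have zVb : (val x == 0 : nat) < Vb v by apply: leq_trans zv (leq_bigmax i).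
exists (Ordinal zVb); first by rewrite inE.
by apply/eqP => /(congr1 val) /=; case: (val x).
Qed.

Record group_merge (v k v' k' : seq nat) (g : nat -> nat) : Prop := GroupMerge {
  merge_lt : forall i, i < size v -> g i < size v';
  merge_size : forall i, i < size v -> nth 0 v' (g i) = nth 0 v i;
  merge_weight : forall i, i < size v -> nth 0 k' (g i) = nth 0 k i;
  merge_collision : forall i j, i < size v -> j < size v -> i != j -> g i = g j ->
    1 < nth 0 k i <= nth 0 v i }.

Section Pullback.
Variables (v k v' k' : seq nat) (g : nat -> nat).
Hypothesis gmerge : group_merge v k v' k' g.
Implicit Types (i j : 'I_(size v)) (x y : 'I_(Vb v)).

Let go (i : 'I_(size v)) : 'I_(size v') := Ordinal (merge_lt gmerge (ltn_ord i)).

Definition pullback (B' : setTuple v') : setTuple v :=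
  [ffun i => resize_set (Vb v) (B' (go i))].

Lemma mem_pullback (B' : setTuple v') i x (x' : 'I_(Vb v')) :
  x' \in B' (go i) -> val x' = val x -> x \in pullback B' i.
Proof.
by move=> x'B x'x; rewrite ffunE inE; apply/existsP; exists x'; rewrite x'B x'x eqxx.
Qed.

Lemma lift_point i x : x \in X v i ->
  exists2 x' : 'I_(Vb v'), val x' = val x & x' \in X v' (go i).
Proof.
rewrite inE -(merge_size gmerge (ltn_ord i)) => xv.
have xVb : val x < Vb v' by apply: leq_trans xv (leq_bigmax (go i)).
by exists (Ordinal xVb); rewrite // inE.
Qed.

Lemma pullback_block (B' : setTuple v') : is_block v' k' B' -> is_block v k (pullback B').
Proof.
move=> /forallP blockB'; apply/forallP => i; rewrite ffunE.
have /andP[subB' /eqP cardB'] := blockB' (go i).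
have B'_lt (x' : 'I_(Vb v')) : x' \in B' (go i) -> val x' < nth 0 v i.
  by move/(subsetP subB'); rewrite inE (merge_size gmerge (ltn_ord i)).
apply/andP; split.
  apply/subsetP => y; rewrite !inE => /existsP [x' /andP[x'B /eqP <-]].
  exact: B'_lt.
rewrite card_resize_set ?cardB' ?(merge_weight gmerge (ltn_ord i)) // => x' /B'_lt xv.
exact: leq_trans xv (leq_bigmax i).
Qed.

Lemma pullback_covers_pairs D' : covers_pairs v' k' D' -> covers_pairs v k (map pullback D').
Proof.
move=> covD' i j x y adm; have /and5P [xX yX ixjy ki /andP[kj kij]] := adm.
have [x' x'x x'X] := lift_point xX; have [y' y'y y'X] := lift_point yX.
suff [B' B'D' /andP[x'B y'B]] :
    exists2 B', B' \in D' & (x' \in B' (go i)) && (y' \in B' (go j)).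
  by exists (pullback B'); rewrite ?map_f ?(mem_pullback x'B) ?(mem_pullback y'B).
have k'i : nth 0 k' (go i) = nth 0 k i := merge_weight gmerge (ltn_ord i).
have k'j : nth 0 k' (go j) = nth 0 k j := merge_weight gmerge (ltn_ord j).
have merged_k2 : go i = go j -> 1 < nth 0 k i.
  case: (eqVneq i j) kij => [-> /= //| ij _ gij].
  by case/andP: (merge_collision gmerge (ltn_ord i) (ltn_ord j) ij (congr1 val gij)).
have [[gij x'y'] | distinct] := eqVneq (go i, x') (go j, y'); last first.
  apply: covD'; rewrite /pair_admissible x'X y'X distinct k'i k'j ki kj /=.
  by apply/implyP => /eqP /merged_k2.
have ij : i != j.
  apply: contraNneq ixjy => eij; subst j.
  by rewrite (_ : x = y) //; apply: val_inj; rewrite -x'x x'y' y'y.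
have /andP[k2 kv] := merge_collision gmerge (ltn_ord i) (ltn_ord j) ij gij.
have [z zX zx'] : exists2 z, z \in X v' (go i) & z != x'.
  by apply: X_other_point; rewrite (merge_size gmerge (ltn_ord i)); apply: leq_trans kv.
have [B' B'D' /andP[x'B _]] :
    exists2 B', B' \in D' & (x' \in B' (go i)) && (z \in B' (go i)).
  apply: covD'; rewrite /pair_admissible x'X zX xpair_eqE eqxx [x' == z]eq_sym.
  by rewrite (negbTE zx') k'i k2 ltnW.
have goji : go j = go i by apply: val_inj; rewrite /= gij.
by exists B'; rewrite // goji -x'y' x'B.
Qed.

Lemma has_GC_of_size_pullback m : has_GC_of_size v' k' m -> has_GC_of_size v k m.
Proof.
case/existsP=> D' /is_GC_pairsP [/allP blocksD' covD'].
apply/existsP; exists [tuple of map pullback D']; apply/is_GC_pairsP; split.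
  by apply/allP => _ /mapP [B' B'D' ->]; apply/pullback_block/blocksD'.
exact: pullback_covers_pairs.
Qed.

End Pullback.

Lemma C_eq_of_group_merges v k v' k' g g' :
  group_merge v k v' k' g -> group_merge v' k' v k g' -> C v k = C v' k'.
Proof.
move=> gmerge g'merge.
have GC_eq m : has_GC_of_size v k m = has_GC_of_size v' k' m.
  by apply/idP/idP; [exact: (has_GC_of_size_pullback g'merge)
                    | exact: (has_GC_of_size_pullback gmerge)].
rewrite /C; case: excluded_middle_informative => [exGC|noGC];
  case: excluded_middle_informative => [exGC'|noGC'] //.
- exact: eq_ex_minn.
- by case: noGC'; case: exGC => m; rewrite GC_eq; exists m.
- by case: noGC; case: exGC' => m; rewrite -GC_eq; exists m.
Qed.

Lemma group_merge_cat (u a w l w' l' : seq nat) g :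
  size a = size u -> group_merge w l w' l' g ->
  group_merge (u ++ w) (a ++ l) (u ++ w') (a ++ l')
    (fun i => if i < size u then i else size u + g (i - size u)).
Proof.
move=> sz_a [g_lt g_size g_weight g_coll].
have nth_shift (b c : seq nat) t : size b = size u ->
    nth 0 (b ++ c) (size u + t) = nth 0 c t.
  by move=> sz_b; rewrite nth_cat sz_b ltnNge leq_addr addKn.
have nth_suffix (b c : seq nat) i : size b = size u -> size u <= i ->
    nth 0 (b ++ c) i = nth 0 c (i - size u).
  by move=> sz_b iu; rewrite nth_cat sz_b ltnNge iu.
split=> [i | i | i | i j]; rewrite !size_cat.
- case: (ltnP i (size u)) => iu isz; first by rewrite ltn_addr.
  by rewrite ltn_add2l g_lt //; lia.
- case: (ltnP i (size u)) => iu isz; first by rewrite !nth_cat iu.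
  by rewrite nth_shift // g_size ?nth_suffix //; lia.
- case: (ltnP i (size u)) => iu isz; first by rewrite !nth_cat sz_a iu.
  by rewrite nth_shift // g_weight ?nth_suffix //; lia.
- case: (ltnP i (size u)) => iu; case: (ltnP j (size u)) => ju isz jsz ij;
    try by move=> e; lia.
  by move=> /addnI gij; rewrite !nth_suffix //; apply: g_coll gij; lia.
Qed.

Lemma group_merge_subseq (w l s : seq nat) :
  uniq s -> {in s, forall j, j < size w} ->
  group_merge [seq nth 0 w j | j <- s] [seq nth 0 l j | j <- s] w l (nth 0 s).
Proof.
move=> s_uniq s_lt.
split=> [t | t | t | t t']; rewrite size_map => ts.
- exact/s_lt/mem_nth.
- by rewrite (nth_map 0).
- by rewrite (nth_map 0).
- by move=> ts' /negbTE tt' /eqP; rewrite nth_uniq // tt'.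
Qed.

Lemma group_merge_reps (w l s : seq nat) :
  (forall i, i < size w -> 1 < nth 0 l i <= nth 0 w i) ->
  (forall i, i < size w ->
     exists2 j, j \in s & nth 0 w j = nth 0 w i /\ nth 0 l j = nth 0 l i) ->
  group_merge w l [seq nth 0 w j | j <- s] [seq nth 0 l j | j <- s]
    (fun i => find (fun j => (nth 0 w j == nth 0 w i) && (nth 0 l j == nth 0 l i)) s).
Proof.
move=> lw s_reps.
have has_rep i : i < size w ->
    has (fun j => (nth 0 w j == nth 0 w i) && (nth 0 l j == nth 0 l i)) s.
  by case/s_reps=> j js [wj lj]; apply/hasP; exists j; rewrite ?wj ?lj ?eqxx.
split=> [i iw | i iw | i iw | i j iw _ _ _]; rewrite ?size_map -?has_find ?has_rep //.
- rewrite (nth_map 0) -?has_find ?has_rep //.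
  by case/andP: (nth_find 0 (has_rep i iw)) => /eqP.
- rewrite (nth_map 0) -?has_find ?has_rep //.
  by case/andP: (nth_find 0 (has_rep i iw)) => _ /eqP.
- exact: lw.
Qed.

Theorem theorem3p13 (r n : nat) (u w l : seq nat) (R : {set 'I_n}) :
  size u = r ->
  (forall i, i < r -> 0 < nth 0 u i) ->
  size w = n -> size l = n ->
  (forall i, i < n -> 2 <= nth 0 l i <= nth 0 w i) ->
  (* R is a set of representatives of i ~ j :<-> w_i = w_j /\ l_i = l_j *)
  (forall i : 'I_n, exists2 j, j \in R &
       (nth 0 w i = nth 0 w j) /\ (nth 0 l i = nth 0 l j)) ->
  (forall j j' : 'I_n, j \in R -> j' \in R ->
       (nth 0 w j = nth 0 w j') /\ (nth 0 l j = nth 0 l j') -> j = j') ->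
  C (u ++ w) (nseq r 1 ++ l) = C (u ++ subtuple w R) (nseq r 1 ++ subtuple l R).
Proof.
move=> <- _ wn _ lw R_reps _.
set s := [seq val j | j <- enum R].
have subtupleE (z : seq nat) : subtuple z R = [seq nth 0 z j | j <- s].
  by rewrite /subtuple /s -map_comp.
have sz_ones : size (nseq (size u) 1) = size u by rewrite size_nseq.
rewrite !subtupleE; apply: C_eq_of_group_merges.
- apply: group_merge_cat sz_ones _; apply: group_merge_reps => i; rewrite wn => iw.
    exact: lw.
  have [j jR [wj lj]] := R_reps (Ordinal iw).
  by exists (val j); rewrite ?map_f ?mem_enum // wj lj.
- apply: group_merge_cat sz_ones _; apply: group_merge_subseq.
    by rewrite /s map_inj_uniq ?enum_uniq //; apply: val_inj.
  by move=> _ /mapP [j _ ->]; rewrite wn ltn_ord.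
Qed.
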